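(* For every $c,c'\in\mathbb{C}$ we have $|r_{\mathrm{bif}}(c)-r_{\mathrm{bif}}(c')|\le|c-c'|$; that is, $r_{\mathrm{bif}}:\mathbb{C}\to[0,\infty)$ is $1$-Lipschitz.
   Context: $f_c(z)=z^2+c$, extended to $\widehat{\mathbb{C}}$ by $f_c(\infty)=\infty$. For $c\in\mathbb{C}$, $r\ge0$, $G_{c,r}$ is the semigroup under composition generated by $\{f_{c'}:|c'-c|\le r\}$. A minimal set of a polynomial semigroup $G$ is a minimal element, with respect to inclusion, of the family of non-empty compact $L\subset\widehat{\mathbb{C}}$ with $g(L)\subset L$ for all $g\in G$; it is planar if $\infty\notin L$. The bifurcation radius $r_{\mathrm{bif}}(c)$ is the supremum of those $r\ge0$ for which $G_{c,r}$ has a planar minimal set (equivalently the infimum of those $r\ge0$ for which $G_{c,r}$ has no planar minimal set); by prior work this value is attained and $G_{c,r}$ has a planar minimal set iff $r\le r_{\mathrm{bif}}(c)$. *)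

From HB Require Import structures.
From mathcomp Require Import all_boot all_order all_algebra.
From mathcomp Require Import all_classical all_reals.
From mathcomp Require Import topology normedtype.
From mathcomp Require Import complex.
Import Order.TTheory GRing.Theory Num.Theory.
Import numFieldNormedType.Exports.
Local Open Scope classical_set_scope.
Local Open Scope ring_scope.
Local Open Scope complex_scope.

Set Implicit Arguments.
Unset Strict Implicit.
Unset Printing Implicit Defensive.

(* The complex plane over a real type R is R[i]; the Riemann sphere is its
   one-point compactification (None = infinity). *)
Notation sphere R := (one_point_compactification ((R : realType)[i])^o).

Definition fquad (R : realType) (c : (R[i])^o) (z : sphere R) : sphere R :=
  match z with
  | Some w => Some (w ^+ 2 + c)
  | None => None
  end.

Inductive in_semigroup (X : Type) (gens : set (X -> X)) : (X -> X) -> Prop :=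
  | sg_gen g : gens g -> in_semigroup gens g
  | sg_comp g h : in_semigroup gens g -> in_semigroup gens h ->
                  in_semigroup gens (g \o h).

Definition Gcr (R : realType) (c : R[i]) (r : R) : (sphere R -> sphere R) -> Prop :=
  in_semigroup [set g | exists c' : (R[i])^o, `|c' - c| <= r%:C /\ g = fquad c'].

Definition invariant_compact (R : realType) (G : (sphere R -> sphere R) -> Prop)
  (L : set (sphere R)) : Prop :=
  L !=set0 /\ compact L /\ (forall g, G g -> g @` L `<=` L).

Definition minimal_set (R : realType) (G : (sphere R -> sphere R) -> Prop)
  (L : set (sphere R)) : Prop :=
  invariant_compact G L /\
  (forall L', invariant_compact G L' -> L' `<=` L -> L' = L).

Definition planar (R : realType) (L : set (sphere R)) : Prop := ~ L None.

Definition has_planar_minimal_set (R : realType) (c : R[i]) (r : R) : Prop :=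
  exists L, minimal_set (Gcr c r) L /\ planar L.

Definition rbif (R : realType) (c : R[i]) : R :=
  sup [set r : R | 0 <= r /\ has_planar_minimal_set c r].

From HB Require Import structures.
From mathcomp Require Import all_boot all_order all_algebra.
From mathcomp Require Import all_classical all_reals.
From mathcomp Require Import topology normedtype.
From mathcomp Require Import complex.
From mathcomp Require Import lra.
Import Order.TTheory GRing.Theory Num.Theory.
Import numFieldNormedType.Exports.
Local Open Scope classical_set_scope.
Local Open Scope ring_scope.
Local Open Scope complex_scope.

Set Implicit Arguments.
Unset Strict Implicit.
Unset Printing Implicit Defensive.

(** If |c - c'| <= d, the closed disc of radius r - d about c' lies in the
    closed disc of radius r about c, so G_{c',r-d} is a subsemigroup of
    G_{c,r}.  A planar minimal set of G_{c,r} is then a compact set invariant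
    under G_{c',r-d}, and by Zorn's lemma it contains a minimal set of
    G_{c',r-d}, which is again planar.  Hence r_bif(c') >= r_bif(c) - d,
    and by symmetry r_bif is 1-Lipschitz. *)

Section OnePointCompactification.
Context {X : topologicalType}.
Local Notation opc := (one_point_compactification X).

Lemma compact_preimage_some (K : set opc) :
  compact K -> ~ K None -> compact (Some @^-1` K).
Proof.
move=> cK KN F PF FK.
have [[x|] [Kp clp]] := cK (Some @ F) _ FK; last by [].
exists x; split => // A B FA Bx.
have FA' : F (Some @^-1` (Some @` A)) by apply: filterS FA => a Aa; exists a.
have [_ [[a Aa <-] [b Bb [ab]]]] :=
  clp _ _ FA' (one_point_compactification_some_nbhs _ _ Bx).
by exists a; split => //; rewrite -ab.
Qed.

Lemma compact_closed_finite (K : set opc) : hausdorff_space X ->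
  compact K -> ~ K None -> closed K.
Proof.
move=> hX cK KN; set W := Some @^-1` K.
have cW : compact W := compact_preimage_some cK KN.
have clW : closed W := compact_closed hX cW.
have WCK : Some @` (~` W) `<=` ~` K by move=> _ [x nWx <-].
rewrite -(setCK K); apply: open_closedC; rewrite openE => -[x|] nKx.
- apply: filterS WCK (one_point_compactification_some_nbhs _ _ _).
  by apply: open_nbhs_nbhs; split => //; exact: closed_openC.
- by exists W => // z [/WCK|->].
Qed.

End OnePointCompactification.

Lemma bigcap_closed_chain_neq0 (T : topologicalType) (F : set (set T))
    (K0 : set T) :
  F K0 -> compact K0 -> total_on F subset ->
  (forall K, F K -> closed K /\ K !=set0) -> \bigcap_(K in F) K !=set0.
Proof.
move=> FK0 cK0 totF clF.
have PF : ProperFilter (filter_from F id).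
  apply: filter_from_proper; last by move=> K /clF[].
  apply: filter_from_filter; first by exists K0.
  move=> K K' FK FK'; have [KK'|K'K] := totF _ _ FK FK'.
  - by exists K => // x Kx; split => //; exact: KK'.
  - by exists K' => // x K'x; split => //; exact: K'K.
have [p [_ clp]] : K0 `&` cluster (filter_from F id) !=set0.
  by apply: cK0; exists K0.
exists p => K FK; apply: (clF _ FK).1 => B Bp.
by apply: clp Bp; exists K.
Qed.

Section MinimalSets.
Variables (R : realType) (G : (sphere R -> sphere R) -> Prop).

Lemma closed_planar_invariant (K : set (sphere R)) :
  invariant_compact G K -> planar K -> closed K.
Proof.
by move=> [_ [cK _]]; apply: compact_closed_finite cK; exact: norm_hausdorff.
Qed.

Lemma invariant_compact_bigcap (F : set (set (sphere R))) (K0 : set (sphere R)) :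
  F K0 -> total_on F subset ->
  (forall K, F K -> invariant_compact G K /\ planar K) ->
  invariant_compact G (\bigcap_(K in F) K).
Proof.
move=> FK0 totF FK; have [[_ [cK0 _]] _] := FK _ FK0.
have clF K : F K -> closed K /\ K !=set0.
  by move=> /FK[iK pK]; split; [exact: closed_planar_invariant|exact: iK.1].
split; [|split].
- exact: bigcap_closed_chain_neq0 FK0 cK0 totF clF.
- apply: subclosed_compact cK0 _; last exact: bigcap_inf.
  by apply: closed_bigI => K /clF[].
- move=> g Gg _ [x Fx <-] K FKK; have [[_ [_ inv]] _] := FK _ FKK.
  by apply: (inv g Gg); exists x => //; exact: Fx.
Qed.

Lemma exists_minimal_subset (L : set (sphere R)) :
  invariant_compact G L -> planar L -> exists2 M, minimal_set G M & M `<=` L.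
Proof.
move=> iL pL.
pose Q K := K `<=` L /\ invariant_compact G K.
pose T := {K | Q K}.
have [M Mmin] : exists M : T, forall N : T, `[< sval N `<=` sval M >] -> N = M.
  apply: (@Zorn T (fun M N => `[< sval N `<=` sval M >])).
  - by move=> M; apply/asboolP.
  - by move=> M N P /asboolP NM /asboolP PN; apply/asboolP; exact: subset_trans NM.
  - by move=> [M QM] [N QN] /asboolP NM /asboolP MN; exact/eq_exist/seteqP.
  move=> A totA; have [[M0 AM0]|A0] := pselect (A !=set0); last first.
    by exists (exist _ L (conj (@subset_refl _ L) iL)) => M AM; case: A0; exists M.
  pose F := [set sval M | M in A].
  have QF : Q (\bigcap_(K in F) K).
    split; first by move=> x Fx; apply: (svalP M0).1; apply: Fx; exists M0.
    apply: (@invariant_compact_bigcap F (sval M0)); first by exists M0.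
    + move=> _ _ [M AM <-] [N AN <-].
      by have [/asboolP|/asboolP] := totA _ _ AM AN; [right|left].
    + move=> _ [K _ <-]; split; first exact: (svalP K).2.
      by move=> /(svalP K).1.
  by exists (exist _ _ QF) => K AK; apply/asboolP => x Fx; apply: Fx; exists K.
exists (sval M); last exact: (svalP M).1.
split=> [|L' iL' L'M]; first exact: (svalP M).2.
have QL' : Q L' := conj (subset_trans L'M (svalP M).1) iL'.
by have /(congr1 sval) := Mmin (exist _ L' QL') (asboolT L'M).
Qed.

End MinimalSets.

Lemma in_semigroupS (X : Type) (A B : set (X -> X)) :
  A `<=` B -> in_semigroup A `<=` in_semigroup B.
Proof.
move=> AB g; elim=> [h /AB|h k _ IHh _ IHk]; [exact: sg_gen|exact: sg_comp].
Qed.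

Lemma closed_ball_shift (R : realType) (c c' : R[i]) (d r : R) :
  `|c - c'| <= d%:C ->
  forall z : R[i], `|z - c'| <= (r - d)%:C -> `|z - c| <= r%:C.
Proof.
move=> cd z zc'; rewrite -(subrK c' z) -addrA.
apply: le_trans (ler_normD _ _) _; rewrite [`|c' - c|]distrC.
by have := lerD zc' cd; rewrite -[_ + d%:C]rmorphD subrK.
Qed.

Lemma has_planar_minimal_setS (R : realType) (c c' : R[i]) (r r' : R) :
  (forall z : R[i], `|z - c'| <= r'%:C -> `|z - c| <= r%:C) ->
  has_planar_minimal_set c r -> has_planar_minimal_set c' r'.
Proof.
move=> sub [L [[[L0 [cL inv]] _] pL]].
have iL : invariant_compact (Gcr c' r') L.
  do 2 split => //; move=> g Gg; apply: inv; apply: in_semigroupS Gg.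
  by move=> _ [z [zc' ->]]; exists z; split => //; exact: sub.
have [M mM ML] := exists_minimal_subset iL pL.
by exists M; split => // /ML.
Qed.

Lemma sup_le_add_shift (R : realType) (A B : set R) (d : R) :
  0 <= d -> (forall b, B b -> 0 <= b) ->
  (forall a, A a -> d <= a -> B (a - d)) ->
  (forall b, B b -> d <= b -> A (b - d)) ->
  sup A <= sup B + d.
Proof.
move=> d0 B0 AB BA.
have supB0 : 0 <= sup B.
  have [supB|] := pselect (has_sup B); last by move/sup_out->.
  by have [b Bb] := supB.1; exact: le_trans (B0 _ Bb) (sup_upper_bound supB Bb).
have [supA|/sup_out->] := pselect (has_sup A); last lra.
apply: ge_sup supA.1 _ => a Aa; have [|da] := leP a d; first lra.
have Bad := AB _ Aa (ltW da).
suff supB : has_sup B by have := sup_upper_bound supB Bad; lra.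
split; first by exists (a - d).
have [M ubM] := supA.2; have aM := ubM _ Aa.
exists (M + d) => b Bb; have [|db] := leP b d; first lra.
by have := ubM _ (BA _ Bb (ltW db)); lra.
Qed.

Lemma rbif_le_add (R : realType) (c c' : R[i]) (d : R) :
  `|c - c'| <= d%:C -> rbif c <= rbif c' + d.
Proof.
move=> cd; have d0 : 0 <= d by rewrite -ler0c (le_trans _ cd).
have c'd : `|c' - c| <= d%:C by rewrite distrC.
apply: sup_le_add_shift d0 _ _ _ => [r []//|r [_ hr] dr|r [_ hr] dr].
- split; first by rewrite subr_ge0.
  exact: has_planar_minimal_setS (closed_ball_shift cd) hr.
- split; first by rewrite subr_ge0.
  exact: has_planar_minimal_setS (closed_ball_shift c'd) hr.
Qed.

Unset Implicit Arguments.
Theorem theorem4p10 (R : realType) (c c' : R[i]) :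
  (`|rbif c - rbif c'|)%:C <= `|c - c'|.
Proof.
set d := complex.Re `|c - c'|.
have dE : `|c - c'| = d%:C by rewrite /d normc_def.
have h1 : rbif c <= rbif c' + d by apply: rbif_le_add; rewrite dE.
have h2 : rbif c' <= rbif c + d by apply: rbif_le_add; rewrite distrC dE.
by rewrite dE lecR ler_norml; apply/andP; split; lra.
Qed.
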